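(* There is a constant $c>0$ such that the following holds for all $n\ge 1$. Let $q,t_1,\dots,t_n$ be $n+1$ distinct qubits, and for each $i$ let $U_i$ be an arbitrary $2\times 2$ unitary and $G_i$ the controlled-$U_i$ gate with control qubit $q$ and target qubit $t_i$. Then the operator $G_nG_{n-1}\cdots G_1$ can be embedded, using at most $cn$ ancillae, in a quantum circuit of depth at most $c\log n$ (for $n\ge 2$).
   Context: Qubits have computational basis $|0\rangle,|1\rangle$. For a $2\times 2$ unitary $U$, the controlled-$U$ gate on (control, target) is the $4\times4$ unitary $\begin{pmatrix}I&0\\0&U\end{pmatrix}$, i.e. it applies $U$ to the target when the control is $|1\rangle$. A one-layer circuit is a tensor product of arbitrary one-qubit and two-qubit unitary gates acting on pairwise disjoint sets of qubits (each qubit interacts with at most one gate); a circuit of depth $k$ is a product of $k$ one-layer circuits. An operator $F$ on $n'$ qubits is embedded in an operator $M$ on $n'+m$ qubits using $m$ ancillae if $M$ maps the subspace where the $m$ ancilla qubits are all $|0\rangle$ into itself and on that subspace equals $F\otimes\mathbf 1$, i.e. $M(|\psi\rangle\otimes|0\cdots0\rangle)=(F|\psi\rangle)\otimes|0\cdots0\rangle$ for all $|\psi\rangle$. *)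

From HB Require Import structures.
From mathcomp Require Import all_boot all_order all_algebra.
From mathcomp Require Import spectral.
From mathcomp Require Import complex reals.

Set Implicit Arguments.
Unset Strict Implicit.
Unset Printing Implicit Defensive.

Import Order.TTheory GRing.Theory Num.Theory.
Local Open Scope ring_scope.

Section Quantum.
Variable C : numClosedFieldType.

(* computational basis states of N qubits *)
Definition bits (N : nat) := {ffun 'I_N -> bool}.

(* operators on N qubits, given by their matrix entries <x|A|y> *)
Definition op (N : nat) := bits N -> bits N -> C.

Definition idop N : op N := fun x y => (x == y)%:R.
Definition mulop N (A B : op N) : op N := fun x y => \sum_z A x z * B z y.
Definition applyop N (A : op N) (v : bits N -> C) : bits N -> C :=
  fun x => \sum_y A x y * v y.

Definition b2o (b : bool) : 'I_2 := inord (nat_of_bool b).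
Definition enc2 (a b : bool) : 'I_4 := inord (2 * a + b).

Definition gate1_op N (i : 'I_N) (U : 'M[C]_2) : op N := fun x y =>
  if [forall k, (k != i) ==> (x k == y k)] then U (b2o (x i)) (b2o (y i)) else 0.

Definition gate2_op N (i j : 'I_N) (V : 'M[C]_4) : op N := fun x y =>
  if [forall k, ((k != i) && (k != j)) ==> (x k == y k)]
  then V (enc2 (x i) (x j)) (enc2 (y i) (y j)) else 0.

Inductive gate (N : nat) :=
  | Gate1 of 'I_N & 'M[C]_2
  | Gate2 of 'I_N & 'I_N & 'M[C]_4.

Definition gate_support N (g : gate N) : seq 'I_N :=
  match g with Gate1 i _ => [:: i] | Gate2 i j _ => [:: i; j] end.

Definition valid_gate N (g : gate N) : bool :=
  match g with
  | Gate1 _ U => U \is unitarymx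
  | Gate2 i j V => (i != j) && (V \is unitarymx)
  end.

Definition gate_op N (g : gate N) : op N :=
  match g with Gate1 i U => gate1_op i U | Gate2 i j V => gate2_op i j V end.

(* one layer: a tensor product of unitary gates on pairwise disjoint qubits *)
Definition layer N := seq (gate N).
Definition valid_layer N (L : layer N) : bool :=
  all (@valid_gate N) L && uniq (flatten (map (@gate_support N) L)).
Definition layer_op N (L : layer N) : op N :=
  foldr (fun g acc => mulop (gate_op g) acc) (@idop N) L.

(* a circuit of depth (size c): a product of (size c) one-layer circuits *)
Definition circuit N := seq (layer N).
Definition valid_circuit N (c : circuit N) : bool := all (@valid_layer N) c.
Definition circuit_op N (c : circuit N) : op N :=
  foldr (fun L acc => mulop (layer_op L) acc) (@idop N) c.

(* embedding with m ancillae: the first n qubits are the data qubits, the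
   last m are the ancillae *)
Definition data_part n m (y : bits (n + m)) : bits n := [ffun i => y (lshift m i)].
Definition tensor0 n (m : nat) (psi : bits n -> C) : bits (n + m) -> C := fun y =>
  if [forall j : 'I_m, ~~ y (rshift n j)] then psi (data_part y) else 0.

Definition embeds n m (F : op n) (M : op (n + m)) : Prop :=
  forall (psi : bits n -> C) (y : bits (n + m)),
    applyop M (@tensor0 n m psi) y = @tensor0 n m (applyop F psi) y.

(* controlled-U (control first): block diag(I, U) *)
Definition ctrl (U : 'M[C]_2) : 'M[C]_4 := \matrix_(r, s)
  if (r < 2)%N then (if (s < 2)%N then (r == s)%:R else 0)
  else if (s < 2)%N then 0 else U (inord (r - 2)) (inord (s - 2)).

(* on n+1 qubits, q = qubit 0, t_i = qubit i+1 (i : 'I_n);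
   G_i = controlled-U_i on (q, t_i);  ctrl_chain U = G_{n-1} ... G_0 *)
Definition G_ctrl n (U : 'I_n -> 'M[C]_2) (i : 'I_n) : op n.+1 :=
  gate2_op ord0 (lift ord0 i) (ctrl (U i)).
Definition ctrl_chain n (U : 'I_n -> 'M[C]_2) : op n.+1 :=
  foldl (fun acc i => mulop (G_ctrl U i) acc) (@idop n.+1) (enum 'I_n).

End Quantum.

(* The control qubit q is first fanned out into the n ancillae by a tree of
   CNOTs: one CNOT copies q into ancilla 0, and the k-th further layer copies
   ancilla j into ancilla j + 2^k for every j < 2^k, so after 1 + ceil(log2 n)
   layers every ancilla holds the computational-basis value of q.  Since no
   gate of the chain changes q, controlling U_i on ancilla i instead of on q
   then gives the same operator; these n gates act on pairwise disjoint qubits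
   and form a single layer.  Undoing the fan-out returns the ancillae to 0, so
   the circuit embeds G_n ... G_1 with n ancillae in depth 2 ceil(log2 n) + 3. *)

From HB Require Import structures.
From mathcomp Require Import all_boot all_order all_algebra.
From mathcomp Require Import spectral.
From mathcomp Require Import complex reals.
From mathcomp Require Import zify.

Set Implicit Arguments.
Unset Strict Implicit.
Unset Printing Implicit Defensive.

Import GRing.Theory Num.Theory.
Local Open Scope ring_scope.

Section PermutationOperators.
Variables (C : numClosedFieldType) (N : nat).
Implicit Types (A B : op C N) (f g : bits N -> bits N).

Definition perm_op f : op C N := fun x y => (x == f y)%:R.

Lemma mulop_perm_r A B f : B =2 perm_op f -> forall x y, mulop A B x y = A x (f y).
Proof.
move=> defB x y; rewrite /mulop (bigD1 (f y)) //= big1 ?addr0 => [|z /negbTE zNfy].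
  by rewrite defB /perm_op eqxx mulr1.
by rewrite defB /perm_op zNfy mulr0.
Qed.

Lemma mulop_perm_l A B f : involutive f -> A =2 perm_op f ->
  forall x y, mulop A B x y = B (f x) y.
Proof.
move=> fK defA x y; rewrite /mulop (bigD1 (f x)) //= big1 ?addr0 => [|z zNfx].
  by rewrite defA /perm_op fK eqxx mul1r.
rewrite defA /perm_op; case: eqP => [xE|]; last by rewrite mul0r.
by rewrite xE fK eqxx in zNfx.
Qed.

Lemma mulop_perm A B f g : A =2 perm_op f -> B =2 perm_op g ->
  mulop A B =2 perm_op (f \o g).
Proof. by move=> defA defB x y; rewrite (mulop_perm_r _ defB) defA. Qed.

Definition preserves_bit (c : 'I_N) A := forall x y : bits N, x c != y c -> A x y = 0.

Lemma preserves_bit_mulop c A B :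
  preserves_bit c A -> preserves_bit c B -> preserves_bit c (mulop A B).
Proof.
move=> pA pB x y xy; apply: big1 => z _.
by case: (eqVneq (x c) (z c)) => [xz|/pA->]; rewrite ?mul0r // pB ?mulr0 // -xz.
Qed.

Lemma preserves_bit_idop c : preserves_bit c (@idop C N).
Proof. by move=> x y; apply: contraNeq; rewrite pnatr_eq0 eqb0 negbK => /eqP->. Qed.

End PermutationOperators.

Lemma forall_neq2 (T : finType) (a b : T) (P : pred T) : a != b ->
  [forall k, (k != b) ==> P k] = [forall k, (k != a) && (k != b) ==> P k] && P a.
Proof.
move=> ab; apply/forallP/andP => [h|[/forallP h Pa] k].
  split; last exact: implyP (h a) ab.
  by apply/forallP => k; apply/implyP => /andP[_ kb]; apply: implyP (h k) kb.
apply/implyP => kb; case: (eqVneq k a) => [-> //|ka].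
by apply: implyP (h k) _; rewrite ka kb.
Qed.

Section ControlledGates.
Variable C : numClosedFieldType.

Lemma ctrlE (U : 'M[C]_2) a t a' t' :
  ctrl U (enc2 a t) (enc2 a' t') =
  if a then (if a' then U (b2o t) (b2o t') else 0) else (if a' then 0 else (t == t')%:R).
Proof.
case: a; case: t; case: a'; case: t'; rewrite /ctrl mxE /enc2 /b2o ?inordK //=.
all: by rewrite -val_eqE /= !inordK.
Qed.

Lemma ctrl_block (U : 'M[C]_2) : ctrl U = block_mx 1%:M 0 0 U :> 'M_(2 + 2).
Proof.
apply/matrixP => r s; rewrite /ctrl mxE.
case: (split_ordP r) => r' ->; case: (split_ordP s) => s' ->;
  rewrite ?block_mxEul ?block_mxEur ?block_mxEdl ?block_mxEdr /= ?mxE ?ltn_ord //.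
by congr (U _ _); apply: val_inj; rewrite /= addKn inordK.
Qed.

Lemma ctrl_unitary (U : 'M[C]_2) : U \is unitarymx -> ctrl U \is unitarymx.
Proof.
move=> /unitarymxP UU; apply/unitarymxP; rewrite ctrl_block.
set B := block_mx _ _ _ _.
suff : B *m (B ^t*)%sesqui = 1%:M :> 'M_(2 + 2) by [].
rewrite tr_block_mx map_block_mx mulmx_block !trmx0 !map_mx0 !mulmx0 !mul0mx.
by rewrite !addr0 !add0r trmx1 map_mx1 mulmx1 UU -scalar_mx_block.
Qed.

Definition pauliX : 'M[C]_2 := \matrix_(i, j) (i != j)%:R.

Lemma pauliX_unitary : pauliX \is unitarymx.
Proof.
apply/unitarymxP/matrixP => i j; rewrite !mxE !big_ord_recl big_ord0 !mxE.
case: i => [[|[|//]] ?]; case: j => [[|[|//]] ?];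
  by rewrite /= ?rmorph0 ?rmorph1 ?mulr0 ?mul0r ?mulr1 ?addr0 ?add0r.
Qed.

Lemma pauliX_b2o a b : pauliX (b2o a) (b2o b) = (a != b)%:R.
Proof. by rewrite mxE; case: a; case: b; rewrite /b2o -?val_eqE /= ?inordK. Qed.

Variable N : nat.
Implicit Types (c t : 'I_N) (x y : bits N).

Lemma gate2_ctrlE c t (V : 'M[C]_2) x y : c != t ->
  gate2_op c t (ctrl V) x y =
  [forall k, (k != t) ==> (x k == y k)]%:R *
  (if y c then V (b2o (x t)) (b2o (y t)) else (x t == y t)%:R).
Proof.
move=> ct; rewrite /gate2_op ctrlE (forall_neq2 _ ct).
case: [forall k, _]; rewrite ?mul0r //=.
by case: (x c); case: (y c); rewrite ?mul0r ?mul1r.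
Qed.

Definition cnot c t x : bits N := [ffun k => x k (+) ((k == t) && x c)].

Lemma eq_cnot c t x y :
  (x == cnot c t y) = [forall k, (k != t) ==> (x k == y k)] && (x t == y t (+) y c).
Proof.
apply/eqP/andP => [->|[/forallP xy /eqP xt]].
  split; last by rewrite ffunE eqxx.
  by apply/forallP => k; apply/implyP => kt; rewrite ffunE (negbTE kt) addbF.
apply/ffunP => k; rewrite ffunE; case: (eqVneq k t) => [-> //|kt].
by rewrite addbF; apply/eqP/(implyP (xy k)).
Qed.

Lemma cnot_gateE c t :
  c != t -> gate2_op c t (ctrl pauliX) =2 perm_op C (cnot c t).
Proof.
move=> ct x y; rewrite gate2_ctrlE // /perm_op eq_cnot -mulnb natrM.
by case: (y c); rewrite ?pauliX_b2o ?addbT ?addbF //; case: (x t); case: (y t).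
Qed.

End ControlledGates.

Lemma perm_flatten_pairs (T : eqType) (ps : seq (T * T)) :
  perm_eq (flatten [seq [:: p.1; p.2] | p <- ps]) (unzip1 ps ++ unzip2 ps).
Proof.
elim: ps => //= -[a b] ps IH; rewrite perm_cons.
by rewrite perm_sym (perm_catCA _ [:: b]) /= perm_cons perm_sym.
Qed.

Section CnotLayers.
Variable N : nat.
Implicit Types (ps : seq ('I_N * 'I_N)) (pss : seq (seq ('I_N * 'I_N))) (x y : bits N).

Definition cnots ps x : bits N :=
  [ffun k => x k (+) has (fun p => (p.2 == k) && x p.1) ps].

Definition disjoint_pairs ps := uniq (unzip1 ps ++ unzip2 ps).

Lemma disjoint_pairs_cons c t ps :
  disjoint_pairs ((c, t) :: ps) =
  [&& t != c, t \notin unzip1 ps ++ unzip2 ps, c \notin unzip1 ps ++ unzip2 ps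
    & disjoint_pairs ps].
Proof.
have -> : disjoint_pairs ((c, t) :: ps) = uniq ([:: t] ++ (c :: unzip1 ps) ++ unzip2 ps).
  by apply/perm_uniq/permPl; exact: (perm_catCA (c :: unzip1 ps) [:: t] (unzip2 ps)).
by rewrite /= in_cons negb_or -andbA.
Qed.

Lemma disjoint_ctrl_notin ps p : disjoint_pairs ps -> p \in ps -> p.1 \notin unzip2 ps.
Proof.
rewrite /disjoint_pairs cat_uniq => /and3P[_ /hasPn disj _] pps.
exact: contraL (disj p.1) (map_f _ pps).
Qed.

Lemma cnots_notin ps x k : k \notin unzip2 ps -> cnots ps x k = x k.
Proof.
move=> kN; rewrite ffunE; case: hasP => [[p pps /andP[/eqP p2k _]]|_].
  by rewrite -p2k map_f in kN.
by rewrite addbF.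
Qed.

Lemma cnots_cons c t ps x : c \notin unzip2 ps -> t \notin unzip2 ps ->
  cnots ((c, t) :: ps) x = cnot c t (cnots ps x).
Proof.
move=> cN tN; apply/ffunP => k.
rewrite [cnot _ _ _ _]ffunE (cnots_notin _ cN) !ffunE /=.
case: (eqVneq k t) => [->|kt] /=; last by rewrite addbF.
case: hasP => [[p pps /andP[/eqP p2t _]]|_]; first by rewrite -p2t map_f in tN.
by rewrite orbF addbF.
Qed.

Lemma cnots_involutive ps : disjoint_pairs ps -> involutive (cnots ps).
Proof.
move=> dps x; apply/ffunP => k; rewrite ffunE.
rewrite (@eq_in_has _ _ (fun p => (p.2 == k) && x p.1)) => [|p pps].
  by rewrite ffunE addbK.
by rewrite /= cnots_notin // disjoint_ctrl_notin.
Qed.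

Definition run_cnots pss x := foldl (fun x ps => cnots ps x) x pss.

Lemma run_cnots_inj pss : all disjoint_pairs pss -> injective (run_cnots pss).
Proof.
elim: pss => [_ //|ps pss IH] /= /andP[dps dpss] x y /(IH dpss).
exact: (can_inj (cnots_involutive dps)).
Qed.

Lemma run_cnotsK pss :
  all disjoint_pairs pss -> cancel (run_cnots pss) (run_cnots (rev pss)).
Proof.
elim: pss => [_ //|ps pss IH] /= /andP[dps dpss] x.
by rewrite rev_cons /run_cnots foldl_rcons -/(run_cnots _ _) IH // cnots_involutive.
Qed.

Lemma run_cnots_revK pss :
  all disjoint_pairs pss -> cancel (run_cnots (rev pss)) (run_cnots pss).
Proof. by rewrite -all_rev => /run_cnotsK; rewrite revK. Qed.

Variable C : numClosedFieldType.

Definition cnot_layer ps : layer C N :=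
  [seq Gate2 p.1 p.2 (ctrl (pauliX C)) | p <- ps].

Lemma cnot_layer_valid ps : disjoint_pairs ps -> valid_layer (cnot_layer ps).
Proof.
move=> dps; apply/andP; split.
  rewrite all_map; apply/allP => p pps /=.
  rewrite ctrl_unitary ?pauliX_unitary // andbT.
  by apply: contraNneq (disjoint_ctrl_notin dps pps) => ->; rewrite map_f.
by rewrite -map_comp (perm_uniq (perm_flatten_pairs ps)).
Qed.

Lemma cnot_layer_perm ps :
  disjoint_pairs ps -> layer_op (cnot_layer ps) =2 perm_op C (cnots ps).
Proof.
elim: ps => [_ x y|[c t] ps IH].
  by congr (_ == _)%:R; apply/ffunP => k; rewrite ffunE addbF.
rewrite disjoint_pairs_cons !mem_cat !negb_or.
move=> /and4P[tc /andP[_ tN] /andP[_ cN] dps] x y.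
rewrite /layer_op /= (mulop_perm (cnot_gateE _ _) (IH dps)) 1?eq_sym //.
by rewrite /perm_op /= cnots_cons.
Qed.

Lemma cnot_layers_mulop pss (Z : op C N) x y : all disjoint_pairs pss ->
  foldr (fun L acc => mulop (layer_op L) acc) Z (map cnot_layer pss) x y =
  Z (run_cnots pss x) y.
Proof.
elim: pss x => [//|ps pss IH] x /= /andP[dps dpss].
by rewrite (mulop_perm_l _ (cnots_involutive dps) (cnot_layer_perm dps)) IH.
Qed.

Lemma cnot_circuit_rev_perm pss : all disjoint_pairs pss ->
  circuit_op (map cnot_layer (rev pss)) =2 perm_op C (run_cnots pss).
Proof.
move=> dpss x y; rewrite /circuit_op cnot_layers_mulop ?all_rev // /idop /perm_op.
suff -> : (run_cnots (rev pss) x == y) = (x == run_cnots pss y) by [].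
by apply/eqP/eqP => [<-|->]; rewrite ?run_cnots_revK ?run_cnotsK.
Qed.

Lemma cnot_sandwichE pss (mid : layer C N) x y : all disjoint_pairs pss ->
  circuit_op (map cnot_layer pss ++ mid :: rev (map cnot_layer pss)) x y =
  layer_op mid (run_cnots pss x) (run_cnots pss y).
Proof.
move=> dpss; rewrite /circuit_op foldr_cat cnot_layers_mulop //= -map_rev.
exact: mulop_perm_r (cnot_circuit_rev_perm dpss) _ _.
Qed.

End CnotLayers.

Arguments cnots {N}.
Arguments disjoint_pairs {N}.
Arguments run_cnots {N}.
Arguments cnot_layer {N} C.

Section Registers.
Variables (C : numClosedFieldType) (n m : nat).
Implicit Types (d : bits n) (a : bits m) (x y : bits (n + m)).

Definition ancilla_part x : bits m := [ffun j => x (rshift n j)].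

Definition join_bits d a : bits (n + m) :=
  [ffun k => match split k with inl i => d i | inr j => a j end].

Lemma join_bitsL d a i : join_bits d a (lshift m i) = d i.
Proof. by rewrite ffunE (unsplitK (inl _ i)). Qed.

Lemma join_bitsR d a j : join_bits d a (rshift n j) = a j.
Proof. by rewrite ffunE (unsplitK (inr _ j)). Qed.

Lemma data_part_join d a : data_part (join_bits d a) = d.
Proof. by apply/ffunP => i; rewrite ffunE join_bitsL. Qed.

Lemma ancilla_part_join d a : ancilla_part (join_bits d a) = a.
Proof. by apply/ffunP => j; rewrite ffunE join_bitsR. Qed.

Lemma join_parts x : join_bits (data_part x) (ancilla_part x) = x.
Proof.
apply/ffunP => k; case: (split_ordP k) => [i|j] ->;
  by rewrite ?join_bitsL ?join_bitsR ffunE.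
Qed.

Lemma eq_join_bits x d a :
  (x == join_bits d a) = (data_part x == d) && (ancilla_part x == a).
Proof.
apply/eqP/andP => [->|[/eqP <- /eqP <-]]; last by rewrite join_parts.
by rewrite data_part_join ancilla_part_join.
Qed.

Lemma sum_ancilla_eq (h : bits (n + m) -> C) a :
  \sum_x (if ancilla_part x == a then h x else 0) = \sum_d h (join_bits d a).
Proof.
rewrite (reindex (fun p : bits n * bits m => join_bits p.1 p.2)) /=; last first.
  exists (fun x => (data_part x, ancilla_part x)) => [[d b] _|x _] /=.
    by rewrite data_part_join ancilla_part_join.
  exact: join_parts.
rewrite -(pair_big xpredT xpredT (fun d b => if ancilla_part (join_bits d b) == a
  then h (join_bits d b) else 0)) /=.
apply: eq_bigr => d _; rewrite -big_mkcond /=.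
under eq_bigl => b do rewrite ancilla_part_join.
by rewrite big_pred1_eq.
Qed.

Lemma zero_ancillasE x :
  [forall j, ~~ x (rshift n j)] = (ancilla_part x == [ffun=> false]).
Proof.
apply/forallP/eqP => [x0|x0 j].
  by apply/ffunP => j; rewrite !ffunE; apply/negbTE.
by have := congr1 (fun a : bits m => a j) x0; rewrite !ffunE => ->.
Qed.

Lemma agree_off_data (t : 'I_n) x d a :
  [forall k, (k != lshift m t) ==> (x k == join_bits d a k)] =
  (ancilla_part x == a) && [forall k, (k != t) ==> (data_part x k == d k)].
Proof.
apply/forallP/andP => [xda|[/eqP <- /forallP xd] k].
  split.
    apply/eqP/ffunP => j; have := xda (rshift n j).
    by rewrite eq_rlshift join_bitsR ffunE => /eqP.
  apply/forallP => i; apply/implyP => it; have := xda (lshift m i).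
  by rewrite eq_lshift it join_bitsL ffunE.
case: (split_ordP k) => [i|j] ->; last by rewrite join_bitsR ffunE eqxx implybT.
by rewrite eq_lshift join_bitsL; have := xd i; rewrite ffunE.
Qed.

Lemma data_part_run_cnots pss x :
  (forall ps i, ps \in pss -> lshift m i \notin unzip2 ps) ->
  data_part (run_cnots pss x) = data_part x.
Proof.
elim: pss x => //= ps pss IH x dataN.
rewrite IH => [|ps' i ps'F]; last by apply: dataN; rewrite inE ps'F orbT.
by apply/ffunP => i; rewrite ffunE [RHS]ffunE cnots_notin // dataN ?mem_head.
Qed.

Lemma embeds_by_columns (F : op C n) (M : op C (n + m)) :
  (forall y d, M y (join_bits d [ffun=> false]) =
     (ancilla_part y == [ffun=> false])%:R * F (data_part y) d) ->
  embeds F M.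
Proof.
move=> Mcol psi y; rewrite /applyop /tensor0 zero_ancillasE.
under eq_bigr => x _ do rewrite zero_ancillasE (fun_if (GRing.mul _)) mulr0.
rewrite sum_ancilla_eq; under eq_bigr => d _ do rewrite Mcol data_part_join -mulrA.
by rewrite -mulr_sumr; case: eqP; rewrite ?mul1r ?mul0r.
Qed.

End Registers.

Section Fanout.
Variable n : nat.
Local Notation N := (n.+1 + n)%N.
Implicit Types (d : bits n.+1) (x y : bits N).

Definition copy_pairs : seq ('I_N * 'I_N) :=
  if insub 0%N is Some j0 then [:: (lshift n ord0, rshift n.+1 j0)] else [::].

Definition doubling_pred k :=
  [pred p : 'I_n * 'I_n | (p.1 < 2 ^ k)%N && (p.2 == p.1 + 2 ^ k :> nat)%N].

Definition doubling_pairs k : seq ('I_N * 'I_N) :=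
  [seq (rshift n.+1 p.1, rshift n.+1 p.2) | p <- enum (doubling_pred k)].

Definition fanout K := copy_pairs :: [seq doubling_pairs k | k <- iota 0 K].

Definition fanned k d : bits N := join_bits d [ffun j : 'I_n => d ord0 && (j < 2 ^ k)%N].

Lemma fanout_disjoint K : all disjoint_pairs (fanout K).
Proof.
rewrite /= all_map; apply/andP; split.
  by rewrite /copy_pairs; case: insubP => //= j0 _ _; rewrite inE eq_lrshift.
apply/allP => k _ /=; rewrite /disjoint_pairs /unzip1 /unzip2 -!map_comp cat_uniq.
have inA p : p \in enum (doubling_pred k) ->
    (p.1 < 2 ^ k)%N && (p.2 == p.1 + 2 ^ k :> nat)%N by rewrite mem_enum.
rewrite !map_inj_in_uniq ?enum_uniq ?andbT //=.
- apply/hasPn => _ /mapP[q qA ->]; apply/mapP => -[p pA /= /rshift_inj pq].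
  by move: (inA _ pA) (inA _ qA); rewrite pq /=; lia.
- move=> -[p1 p2] [q1 q2] /inA /= pA /inA /= qA /rshift_inj pq; subst q2.
  by congr pair; apply: val_inj; move: pA qA => /=; lia.
- move=> -[p1 p2] [q1 q2] /inA /= pA /inA /= qA /rshift_inj pq; subst q1.
  by congr pair; apply: val_inj; move: pA qA => /=; lia.
Qed.

Lemma fanout_data_targets K ps i : ps \in fanout K -> lshift n i \notin unzip2 ps.
Proof.
have lNr (s : seq 'I_n) : lshift n i \notin map (@rshift n.+1 n) s.
  by apply/mapP => -[j _ /eqP]; rewrite eq_lrshift.
rewrite inE => /orP[/eqP->|/mapP[k _ ->]].
  by rewrite /copy_pairs; case: insubP => //= j0 _ _; rewrite inE eq_lrshift.
by rewrite /unzip2 -map_comp (map_comp (@rshift n.+1 n) snd) lNr.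
Qed.

Lemma data_part_run_fanout K x : data_part (run_cnots (fanout K) x) = data_part x.
Proof. by apply: data_part_run_cnots => ps i; apply: fanout_data_targets. Qed.

Lemma cnots_copy d : cnots copy_pairs (join_bits d [ffun=> false]) = fanned 0 d.
Proof.
apply/ffunP => k; case: (split_ordP k) => [i|j] ->.
  rewrite cnots_notin ?(fanout_data_targets (K := 0)) ?mem_head //.
  by rewrite /fanned !join_bitsL.
rewrite ffunE !join_bitsR !ffunE /= /copy_pairs expn0 ltnS leqn0 andbC.
case: insubP => [j0 _ j0E|/negP[]]; last exact: leq_ltn_trans (ltn_ord j).
by rewrite /= orbF join_bitsL eq_rshift -val_eqE j0E eq_sym.
Qed.

Lemma cnots_doubling k d : cnots (doubling_pairs k) (fanned k d) = fanned k.+1 d.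
Proof.
apply/ffunP => kk; case: (split_ordP kk) => [i|j] ->.
  have dF : doubling_pairs k \in fanout k.+1.
    by rewrite in_cons map_f ?orbT // mem_iota add0n ltnSn.
  by rewrite cnots_notin ?(fanout_data_targets _ dF) // /fanned !join_bitsL.
rewrite ffunE !join_bitsR !ffunE has_map.
have -> : has (preim (fun p => (rshift n.+1 p.1, rshift n.+1 p.2))
    (fun p => (p.2 == rshift n.+1 j) && fanned k d p.1)) (enum (doubling_pred k)) =
  [&& d ord0, 2 ^ k <= j & j < 2 ^ k.+1]%N.
  rewrite expnS; apply/hasP/and3P => [[[a b]]|[d0 hj jh]].
    rewrite mem_enum /= => /andP[ah /eqP bE] /andP[/eqP/rshift_inj <-].
    rewrite /fanned join_bitsR ffunE => /andP[-> _]; move: ah bE => /= ah bE.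
    by split => //; lia.
  have jh_lt : (j - 2 ^ k < n)%N by move: (ltn_ord j); lia.
  exists (Ordinal jh_lt, j); rewrite ?mem_enum /= ?eqxx /=.
    by rewrite inE /=; apply/andP; split; [lia | apply/eqP; lia].
  by rewrite /fanned join_bitsR ffunE /= d0; lia.
case: (d ord0) => //=; case: (ltnP j (2 ^ k)) => //= jh.
by rewrite (leq_trans jh) // leq_pexp2l.
Qed.

Lemma run_fanout K d : run_cnots (fanout K) (join_bits d [ffun=> false]) = fanned K d.
Proof.
rewrite /run_cnots /= cnots_copy -[fanned K d]/(fanned (0 + K) d).
by elim: K 0%N => [|K IH] k /=; rewrite ?addn0 // cnots_doubling IH (addSnnS k K).
Qed.

Lemma fanned_full K d : (n <= 2 ^ K)%N -> fanned K d = join_bits d [ffun=> d ord0].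
Proof.
move=> nK; congr join_bits; apply/ffunP => j; rewrite !ffunE.
by rewrite (leq_trans (ltn_ord j) nK) andbT.
Qed.

Lemma fanout_ancillas K y : (n <= 2 ^ K)%N ->
  (ancilla_part (run_cnots (fanout K) y) == [ffun=> data_part y ord0]) =
  (ancilla_part y == [ffun=> false]).
Proof.
move=> nK; set F := run_cnots (fanout K); set d := data_part y.
have joinE (a b : bits n) : (join_bits d a == join_bits d b) = (a == b).
  exact/inj_eq/(can_inj (ancilla_part_join _)).
have FyE : F y = join_bits d (ancilla_part (F y)).
  by rewrite -[d](data_part_run_fanout K y) join_parts.
have Fy0E : F (join_bits d [ffun=> false]) = join_bits d [ffun=> d ord0].
  by rewrite /F run_fanout fanned_full.
rewrite -joinE -FyE -Fy0E (inj_eq (run_cnots_inj (fanout_disjoint K))).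
by rewrite -joinE join_parts.
Qed.

End Fanout.

Section FanoutCircuit.
Variables (C : numClosedFieldType) (n : nat) (U : 'I_n -> 'M[C]_2).
Local Notation N := (n.+1 + n)%N.

Definition anc_ctrl_layer : layer C N :=
  [seq Gate2 (rshift n.+1 i) (lshift n (lift ord0 i)) (ctrl (U i)) | i <- rev (enum 'I_n)].

Definition anc_ctrl_op i : op C N :=
  gate2_op (rshift n.+1 i) (lshift n (lift ord0 i)) (ctrl (U i)).

Definition anc_ctrl_prod (s : seq 'I_n) : op C N :=
  foldr (fun i acc => mulop (anc_ctrl_op i) acc) (@idop C N) s.

Definition ctrl_prod (s : seq 'I_n) : op C n.+1 :=
  foldr (fun i acc => mulop (G_ctrl U i) acc) (@idop C n.+1) s.

Lemma ctrl_chain_prod : ctrl_chain U = ctrl_prod (rev (enum 'I_n)).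
Proof. by rewrite /ctrl_chain -[in LHS](revK (enum 'I_n)) foldl_rev. Qed.

Lemma layer_op_anc_ctrl : layer_op anc_ctrl_layer = anc_ctrl_prod (rev (enum 'I_n)).
Proof. by rewrite /layer_op foldr_map. Qed.

Lemma anc_ctrl_layer_valid :
  (forall k, U k \is unitarymx) -> valid_layer anc_ctrl_layer.
Proof.
move=> Uu; apply/andP; split.
  by rewrite all_map; apply/allP => i _; rewrite /= eq_rlshift ctrl_unitary.
set ps := [seq (rshift n.+1 i, lshift n (lift ord0 i)) | i <- rev (enum 'I_n)].
have -> : [seq gate_support g | g <- anc_ctrl_layer] = [seq [:: p.1; p.2] | p <- ps].
  by rewrite -!map_comp.
rewrite (perm_uniq (perm_flatten_pairs ps)) cat_uniq /unzip1 /unzip2 -!map_comp.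
rewrite !map_inj_uniq ?rev_uniq ?enum_uniq ?andbT //=.
- by apply/hasPn => _ /mapP[i _ ->]; apply/mapP => -[j _ /eqP]; rewrite eq_lrshift.
- by move=> i j /lshift_inj /lift_inj.
- exact: rshift_inj.
Qed.

Lemma G_ctrl_preserves_ctrl i : preserves_bit ord0 (G_ctrl U i).
Proof.
move=> x y xy; rewrite /G_ctrl gate2_ctrlE ?neq_lift //.
suff /negbTE-> : ~~ [forall k, (k != lift ord0 i) ==> (x k == y k)] by rewrite mul0r.
by apply/forallPn; exists ord0; rewrite neq_lift.
Qed.

Lemma ctrl_prod_preserves_ctrl s : preserves_bit ord0 (ctrl_prod s).
Proof.
elim: s => [|i s IH]; first exact: preserves_bit_idop.
exact: preserves_bit_mulop (G_ctrl_preserves_ctrl i) IH.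
Qed.

Lemma anc_ctrl_opE i x dw :
  anc_ctrl_op i x (join_bits dw [ffun=> dw ord0]) =
  (ancilla_part x == [ffun=> dw ord0])%:R * G_ctrl U i (data_part x) dw.
Proof.
rewrite /anc_ctrl_op /G_ctrl !gate2_ctrlE ?eq_rlshift ?neq_lift //.
by rewrite agree_off_data join_bitsR join_bitsL !ffunE -mulnb natrM mulrA.
Qed.

Lemma anc_ctrl_prodE s x d :
  anc_ctrl_prod s x (join_bits d [ffun=> d ord0]) =
  (ancilla_part x == [ffun=> d ord0])%:R * ctrl_prod s (data_part x) d.
Proof.
elim: s x => [|i s IH] x /=.
  by rewrite /idop eq_join_bits andbC -mulnb natrM.
rewrite /mulop; under eq_bigr => w _ do rewrite IH mulrCA mulr_natl mulrb.
rewrite sum_ancilla_eq mulr_sumr; apply: eq_bigr => dw _; rewrite data_part_join.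
case: (eqVneq (dw ord0) (d ord0)) => [<-|dwd]; first by rewrite anc_ctrl_opE mulrA.
by rewrite ctrl_prod_preserves_ctrl ?mulr0.
Qed.

Definition fanout_circuit K : circuit C N :=
  let L := map (cnot_layer C) (fanout n K) in L ++ anc_ctrl_layer :: rev L.

Lemma fanout_circuit_valid K :
  (forall k, U k \is unitarymx) -> valid_circuit (fanout_circuit K).
Proof.
move=> Uu; have validL : all (@valid_layer C N) (map (cnot_layer C) (fanout n K)).
  rewrite all_map; apply/allP => ps /(allP (fanout_disjoint n K)).
  exact: cnot_layer_valid.
by rewrite /valid_circuit all_cat -cat1s all_cat all_rev validL /= anc_ctrl_layer_valid.
Qed.

Lemma size_fanout_circuit K : size (fanout_circuit K) = (2 * K + 3)%N.
Proof. by rewrite size_cat /= size_rev !size_map /= !size_map size_iota; lia. Qed.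

Lemma fanout_circuit_embeds K :
  (n <= 2 ^ K)%N -> embeds (ctrl_chain U) (circuit_op (fanout_circuit K)).
Proof.
move=> nK; apply: embeds_by_columns => y d.
rewrite cnot_sandwichE ?fanout_disjoint // run_fanout fanned_full // layer_op_anc_ctrl.
rewrite anc_ctrl_prodE data_part_run_fanout ctrl_chain_prod.
case: (eqVneq (data_part y ord0) (d ord0)) => [<-|yd]; first by rewrite fanout_ancillas.
by rewrite ctrl_prod_preserves_ctrl ?mulr0.
Qed.

End FanoutCircuit.

Theorem proposition2 :
  exists c : nat, (0 < c)%N /\
  forall (R : realType) (n : nat) (U : 'I_n -> 'M[R[i]]_2),
    (1 <= n)%N ->
    (forall k, U k \is unitarymx) ->
    exists (m : nat) (M : circuit R[i] (n.+1 + m)),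
      [/\ valid_circuit M,
          (m <= c * n)%N,
          ((2 <= n)%N -> (size M <= c * up_log 2 n)%N)
        & embeds (ctrl_chain U) (circuit_op M)].
Proof.
exists 5%N; split => // R n U n_gt0 Uu.
exists n, (fanout_circuit U (up_log 2 n)); split.
- exact: fanout_circuit_valid.
- by rewrite leq_pmull.
- move=> n_gt1; have : (0 < up_log 2 n)%N by rewrite up_log_gt0 n_gt1.
  by rewrite size_fanout_circuit; lia.
- exact/fanout_circuit_embeds/up_logP.
Qed.
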